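(* Let $\mathbf{p}_G=(x_G,y_G,z_G)$ be such that $\sigma_{\mathbf{a}}(x_G,y_G)>0$ for every row of $\mathbf{A}_O$. For each row $[\mathbf{a}_O^\top\ \mathbf{a}^\top]$ define $$\alpha_{\mathbf{a}}=a_{Ox}+a_y z_G-a_z y_G,\qquad \beta_{\mathbf{a}}=a_{Oy}-a_x z_G+a_z x_G,$$ and let $\mathcal{P}=\{(\tilde x,\tilde y)\in\mathbb{R}^2:\ \frac{\alpha_{\mathbf{a}}}{\sigma_{\mathbf{a}}}\tilde x+\frac{\beta_{\mathbf{a}}}{\sigma_{\mathbf{a}}}\tilde y\le 1 \text{ for every row}\}$, where $\sigma_{\mathbf{a}}=\sigma_{\mathbf{a}}(x_G,y_G)$. Then for every $\mathbf{u}=(u_x,u_y,u_z)$ with $u_z>-g$, $$\mathbf{u}\in\mathcal{C}(\mathbf{p}_G)\iff \frac{1}{g+u_z}(u_x,u_y)\in\mathcal{P}.$$ Consequently $\mathcal{C}(\mathbf{p}_G)\cap\{u_z>-g\}=\{(0,0,-g)+\lambda(\tilde x,\tilde y,1):\ \lambda>0,\ (\tilde x,\tilde y)\in\mathcal{P}\}$, i.e. it is (the part above its apex of) an upward-pointing convex cone with apex $(0,0,-g)$ and rays $(\tilde x,\tilde y,1)$, $(\tilde x,\tilde y)\in\mathcal{P}$.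
   Context: Setting: a robot of mass $m>0$ in contact with its environment at $K$ contact points with coordinates $\mathbf{c}_1,\dots,\mathbf{c}_K\in\mathbb{R}^3$ (inertial frame with origin $O$, $z$-axis vertical upward). Admissible contact forces at contact $i$ form a polyhedral convex cone $\widetilde{\mathcal{C}}_i=\{\mathbf{f}_i:\mathbf{F}_i\mathbf{f}_i\le \mathbf{0}\}$. The contact wrench cone is $\mathrm{CWC}_O=\{(\sum_i \mathbf{f}_i,\ \sum_i \mathbf{c}_i\times\mathbf{f}_i):\ \mathbf{f}_i\in\widetilde{\mathcal{C}}_i\}\subseteq\mathbb{R}^6$; fix $\mathbf{A}_O$ (6 columns) with $\mathrm{CWC}_O=\{\mathbf{w}:\mathbf{A}_O\mathbf{w}\le\mathbf{0}\}$, each row written $[\mathbf{a}_O^\top\ \mathbf{a}^\top]$ with $\mathbf{a}_O=(a_{Ox},a_{Oy},a_{Oz})$, $\mathbf{a}=(a_x,a_y,a_z)$. Gravity is $\boldsymbol{\gamma}=(0,0,-g)$, $g>0$. For a row, the slackness is $\sigma_{\mathbf{a}}(x,y)=-a_{Oz}+a_y x-a_x y$. For a COM position $\mathbf{p}\in\mathbb{R}^3$, the set of feasible COM accelerations under zero rate of change of angular momentum is $\mathcal{C}(\mathbf{p})=\{\mathbf{u}\in\mathbb{R}^3:\ (m(\mathbf{u}-\boldsymbol{\gamma}),\ \mathbf{p}\times m(\mathbf{u}-\boldsymbol{\gamma}))\in\mathrm{CWC}_O\}$ (the contact wrench has force $m(\mathbf{u}-\boldsymbol{\gamma})$ and zero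 moment about the COM); it does not depend on $m>0$. *)

From Stdlib Require Import Reals List.
Open Scope R_scope.

Definition vec3 : Type := (R * R * R)%type.
Definition vx (v : vec3) : R := fst (fst v).
Definition vy (v : vec3) : R := snd (fst v).
Definition vz (v : vec3) : R := snd v.

Definition dot3 (a b : vec3) : R := vx a * vx b + vy a * vy b + vz a * vz b.
Definition cross3 (a b : vec3) : vec3 :=
  (vy a * vz b - vz a * vy b, vz a * vx b - vx a * vz b, vx a * vy b - vy a * vx b).
Definition vadd (a b : vec3) : vec3 := (vx a + vx b, vy a + vy b, vz a + vz b).
Definition vsub (a b : vec3) : vec3 := (vx a - vx b, vy a - vy b, vz a - vz b).
Definition vscale (k : R) (a : vec3) : vec3 := (k * vx a, k * vy a, k * vz a).

(* A row [a_O^T a^T] of the 6-column matrix A_O. *)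
Record row := mkRow { aO : vec3 ; aa : vec3 }.

Definition matA := list row.

Definition inCWC (A : matA) (f tau : vec3) : Prop :=
  forall r, In r A -> dot3 (aO r) f + dot3 (aa r) tau <= 0.

Definition gravity (g : R) : vec3 := (0, 0, -g).

(* C(p): feasible COM accelerations under zero rate of change of angular momentum *)
Definition inC (m g : R) (A : matA) (p u : vec3) : Prop :=
  let f := vscale m (vsub u (gravity g)) in
  inCWC A f (cross3 p f).

Definition slack (r : row) (x y : R) : R :=
  - vz (aO r) + vy (aa r) * x - vx (aa r) * y.

Definition alpha (r : row) (pG : vec3) : R :=
  vx (aO r) + vy (aa r) * vz pG - vz (aa r) * vy pG.
Definition beta (r : row) (pG : vec3) : R :=
  vy (aO r) - vx (aa r) * vz pG + vz (aa r) * vx pG.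

Definition inP (A : matA) (pG : vec3) (xt yt : R) : Prop :=
  forall r, In r A ->
    alpha r pG / slack r (vx pG) (vy pG) * xt
    + beta r pG / slack r (vx pG) (vy pG) * yt <= 1.

(** For a contact force [f = m (u - γ)] with zero moment about [p_G], each row
    of [A_O w <= 0] reads [m (α u_x + β u_y - σ (g + u_z)) <= 0]: the row
    constraint is linear in [u] and vanishes at the apex [(0, 0, -g)].
    Dividing by the positive quantity [m σ (g + u_z)] gives the polygon
    inequality for [(u_x, u_y) / (g + u_z)], and the points of the open
    upper half-space [u_z > -g] are exactly [(0, 0, -g) + λ (x̃, ỹ, 1)]
    with [λ = g + u_z > 0]. *)
From Stdlib Require Import Reals List Lra Psatz.
Open Scope R_scope.

Lemma row_wrench_eq (m g : R) (pG u : vec3) (r : row) :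
  let f := vscale m (vsub u (gravity g)) in
  dot3 (aO r) f + dot3 (aa r) (cross3 pG f) =
  m * (vx u * alpha r pG + vy u * beta r pG - (g + vz u) * slack r (vx pG) (vy pG)).
Proof.
  destruct pG as [[px py] pz], u as [[x y] z], r as [[[o1 o2] o3] [[a1 a2] a3]].
  unfold vscale, vsub, gravity, dot3, cross3, alpha, beta, slack, vx, vy, vz; simpl.
  ring.
Qed.

Lemma scaled_halfplane_iff (m s sg a b X Y : R) :
  0 < m -> 0 < s -> 0 < sg ->
  m * (X * a + Y * b - s * sg) <= 0 <-> a / sg * (X / s) + b / sg * (Y / s) <= 1.
Proof.
  intros Hm Hs Hsg.
  set (t := (X * a + Y * b) / (s * sg)).
  replace (a / sg * (X / s) + b / sg * (Y / s)) with t by (unfold t; field; lra).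
  replace (X * a + Y * b) with (t * (s * sg)) by (unfold t; field; lra).
  assert (Hpos : 0 < m * (s * sg)) by (apply Rmult_lt_0_compat; nra).
  split; intros; nra.
Qed.

Lemma inC_iff_inP (m g : R) (A : matA) (pG u : vec3) :
  0 < m -> (forall r, In r A -> 0 < slack r (vx pG) (vy pG)) -> -g < vz u ->
  inC m g A pG u <-> inP A pG (vx u / (g + vz u)) (vy u / (g + vz u)).
Proof.
  intros Hm Hslack Hu; unfold inC, inCWC, inP.
  split; intros H r Hr; specialize (H r Hr); rewrite row_wrench_eq in *.
  - apply scaled_halfplane_iff with (m := m); auto; lra.
  - apply scaled_halfplane_iff; auto; lra.
Qed.

Lemma apex_ray_coords (g lam xt yt : R) (u : vec3) :
  0 < lam -> u = vadd (0, 0, -g) (vscale lam (xt, yt, 1)) ->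
  -g < vz u /\ vx u / (g + vz u) = xt /\ vy u / (g + vz u) = yt.
Proof.
  intros Hlam ->; unfold vadd, vscale, vx, vy, vz; simpl.
  repeat split; [lra | field; lra | field; lra].
Qed.

Lemma apex_ray_exists (g : R) (u : vec3) :
  -g < vz u ->
  u = vadd (0, 0, -g) (vscale (g + vz u) (vx u / (g + vz u), vy u / (g + vz u), 1)).
Proof.
  destruct u as [[x y] z]; unfold vadd, vscale, vx, vy, vz; simpl; intros Hz.
  repeat f_equal; field; lra.
Qed.

Theorem mainTheorem3 (m g : R) (A : matA) (pG : vec3) :
  0 < m -> 0 < g ->
  (forall r, In r A -> 0 < slack r (vx pG) (vy pG)) ->
  (forall u : vec3, -g < vz u ->
     (inC m g A pG u <-> inP A pG (vx u / (g + vz u)) (vy u / (g + vz u))))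
  /\
  (forall u : vec3,
     (inC m g A pG u /\ -g < vz u) <->
     exists lam xt yt, 0 < lam /\ inP A pG xt yt /\
       u = vadd (0, 0, -g) (vscale lam (xt, yt, 1))).
Proof.
  intros Hm _ Hslack.
  split; [intros u; exact (inC_iff_inP m g A pG u Hm Hslack) |].
  intros u; split.
  - intros [HC Hu].
    exists (g + vz u), (vx u / (g + vz u)), (vy u / (g + vz u)).
    split; [lra |].
    split; [apply (inC_iff_inP m g A pG u) | apply apex_ray_exists]; auto.
  - intros (lam & xt & yt & Hlam & HP & Hdec).
    destruct (apex_ray_coords g lam xt yt u Hlam Hdec) as (Hu & Ex & Ey).
    split; [| exact Hu].
    apply (inC_iff_inP m g A pG u); auto.
    rewrite Ex, Ey; exact HP.
Qed.
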